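(* Assume the standing setting below and the structural assumption (H) below (with compact set $K\subset\Sigma$). Let $u$ be the solution of (E) and $c$ the ergodic constant. Then for every $x_0\in K$, the function $t\mapsto u(x_0,t)+ct$ is nonincreasing on $[0,\infty)$.
   Context: Standing setting. $\mathbb T^N=\mathbb R^N/\mathbb Z^N$ is the flat torus, $\Theta$ is a metric space and $C>0$ is a fixed constant. For every $\theta\in\Theta$: $\sigma_\theta\in W^{1,\infty}(\mathbb T^N;\mathcal M_N)$ with $|\sigma_\theta|,|D\sigma_\theta|\le C$, and $A_\theta=\sigma_\theta\sigma_\theta^T$; $H_\theta\in W^{1,\infty}_{\rm loc}(\mathbb T^N\times\mathbb R^N)$ with $|H_\theta(x,0)|\le C$, and for every $R>0$ there is $C_R>0$ independent of $\theta$ with $|H_\theta(x,p)-H_\theta(y,q)|\le C_R(|x-y|+|p-q|)$ for $|p|,|q|\le R$. (E): $u_t+\sup_{\theta}\{-\mathrm{tr}(A_\theta(x)D^2u)+H_\theta(x,Du)\}=0$ in $\mathbb T^N\times(0,\infty)$, $u(x,0)=u_0(x)$; (E$_\lambda$): $\lambda v_\lambda+\sup_{\theta}\{-\mathrm{tr}(A_\theta D^2v_\lambda)+H_\theta(x,Dv_\lambda)\}=0$; (S): $\sup_{\theta}\{-\mathrm{tr}(A_\theta(x)D^2v)+H_\theta(x,Dv)\}=c$. It is assumed that there exist viscosity solutions $u$ of (E) and $v_\lambda$ of (E$_\lambda$) ($\lambda>0$), $C$-Lipschitz in $x$ uniformly in $t,\lambda$; then comparison holds, there is a unique $c\in\mathbb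 R$ (ergodic constant) for which (S) has a Lipschitz solution, and $u+ct$ is bounded. $\Sigma:=\{x:A_\theta(x)=0\ \forall\theta\}$. Assumption (H): there is $\mu_0>1$ with $H_\theta(x,\mu p)-\mu H_\theta(x,p)\ge(1-\mu)c$ for all $(x,p)$, $\theta$, $1<\mu<\mu_0$; and there is a compact $K\subset\Sigma$ with $H_\theta(x,p)\ge c$ for all $(x,p)\in K\times\mathbb R^N$, $\theta\in\Theta$, and $\inf_\theta\{H_\theta(x,\mu p)-\mu H_\theta(x,p)\}>(1-\mu)c$ for all $x\in\Sigma$ with $\operatorname{dist}(x,K)\ne0$, $p\ne0$, $1<\mu\le\mu_0$. *)

From mathcomp Require Import ssreflect ssrfun ssrbool eqtype ssrnat fintype bigop.
From Stdlib Require Import Reals ZArith.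

Set Implicit Arguments.
Unset Strict Implicit.

Local Open Scope R_scope.

Definition pt (N : nat) := 'I_N -> R.
Definition mat (N : nat) := 'I_N -> 'I_N -> R.

Definition vadd N (x y : pt N) : pt N := fun i => x i + y i.
Definition vsub N (x y : pt N) : pt N := fun i => x i - y i.
Definition vscal N (a : R) (x : pt N) : pt N := fun i => a * x i.
Definition vzero N : pt N := fun _ => 0.
Definition dot N (x y : pt N) : R := \big[Rplus/0]_(i < N) (x i * y i).
Definition vnorm N (x : pt N) : R := sqrt (dot x x).

Definition mtr N (A : mat N) : mat N := fun i j => A j i.
Definition mmul N (A B : mat N) : mat N :=
  fun i j => \big[Rplus/0]_(k < N) (A i k * B k j).
Definition trace N (A : mat N) : R := \big[Rplus/0]_(i < N) A i i.
Definition mnorm N (A : mat N) : R :=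
  sqrt (\big[Rplus/0]_(i < N) \big[Rplus/0]_(j < N) (A i j * A i j)).
Definition msub N (A B : mat N) : mat N := fun i j => A i j - B i j.
Definition mzero N : mat N := fun _ _ => 0.
Definition msym N (X : mat N) : Prop := forall i j, X i j = X j i.
Definition quad N (X : mat N) (z : pt N) : R :=
  \big[Rplus/0]_(i < N) \big[Rplus/0]_(j < N) (X i j * z i * z j).

Definition diffmat N (s : mat N) : mat N := mmul s (mtr s).

(* Translation by an integer vector: Z^N-periodicity = functions on the torus. *)
Definition zshift N (x : pt N) (k : 'I_N -> Z) : pt N := fun i => x i + IZR (k i).

Definition periodic N (T : Type) (f : pt N -> T) : Prop :=
  forall x k, f (zshift x k) = f x.

Definition is_metric (T : Type) (d : T -> T -> R) : Prop :=
  (forall a b, 0 <= d a b) /\ (forall a b, d a b = 0 <-> a = b) /\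
  (forall a b, d a b = d b a) /\ (forall a b e, d a e <= d a b + d b e).

(* Compact subset of T^N, represented by its Z^N-periodic lift to R^N,
   which is closed in R^N. *)
Definition torus_compact N (K : pt N -> Prop) : Prop :=
  (forall x k, K (zshift x k) <-> K x) /\
  (forall x, (forall eps, 0 < eps -> exists y, K y /\ vnorm (vsub y x) < eps) -> K x).

Definition standing_data N (Theta : Type) (C : R)
  (sigma : Theta -> pt N -> mat N) (H : Theta -> pt N -> pt N -> R) : Prop :=
  0 < C /\
  (forall th, periodic (sigma th)) /\
  (forall th x, mnorm (sigma th x) <= C) /\
  (* sigma_theta in W^{1,oo} with |D sigma_theta| <= C, i.e. C-Lipschitz *)
  (forall th x y, mnorm (msub (sigma th x) (sigma th y)) <= C * vnorm (vsub x y)) /\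
  (forall th p, periodic (fun x => H th x p)) /\
  (forall th x, Rabs (H th x (@vzero N)) <= C) /\
  (forall Rr, 0 < Rr -> exists CR, 0 < CR /\
     forall th x y p q, vnorm p <= Rr -> vnorm q <= Rr ->
       Rabs (H th x p - H th y q) <= CR * (vnorm (vsub x y) + vnorm (vsub p q))).

Definition psuperjet N (u : pt N -> R -> R) (x : pt N) (t : R)
  (a : R) (p : pt N) (X : mat N) : Prop :=
  msym X /\
  forall eps, 0 < eps -> exists del, 0 < del /\
    forall y s, 0 < s -> vnorm (vsub y x) < del -> Rabs (s - t) < del ->
      u y s <= u x t + a * (s - t) + dot p (vsub y x) + / 2 * quad X (vsub y x)
               + eps * (vnorm (vsub y x) ^ 2 + Rabs (s - t)).

Definition psubjet N (u : pt N -> R -> R) (x : pt N) (t : R)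
  (a : R) (p : pt N) (X : mat N) : Prop :=
  msym X /\
  forall eps, 0 < eps -> exists del, 0 < del /\
    forall y s, 0 < s -> vnorm (vsub y x) < del -> Rabs (s - t) < del ->
      u y s >= u x t + a * (s - t) + dot p (vsub y x) + / 2 * quad X (vsub y x)
               - eps * (vnorm (vsub y x) ^ 2 + Rabs (s - t)).

Definition superjet N (v : pt N -> R) (x : pt N) (p : pt N) (X : mat N) : Prop :=
  msym X /\
  forall eps, 0 < eps -> exists del, 0 < del /\
    forall y, vnorm (vsub y x) < del ->
      v y <= v x + dot p (vsub y x) + / 2 * quad X (vsub y x) + eps * vnorm (vsub y x) ^ 2.

Definition subjet N (v : pt N -> R) (x : pt N) (p : pt N) (X : mat N) : Prop :=
  msym X /\
  forall eps, 0 < eps -> exists del, 0 < del /\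
    forall y, vnorm (vsub y x) < del ->
      v y >= v x + dot p (vsub y x) + / 2 * quad X (vsub y x) - eps * vnorm (vsub y x) ^ 2.

Definition Lop N (Theta : Type) (sigma : Theta -> pt N -> mat N)
  (H : Theta -> pt N -> pt N -> R) (th : Theta) (x p : pt N) (X : mat N) : R :=
  - trace (mmul (diffmat (sigma th x)) X) + H th x p.

Definition cont_on_closed_half N (u : pt N -> R -> R) : Prop :=
  forall x t, 0 <= t -> forall eps, 0 < eps -> exists del, 0 < del /\
    forall y s, 0 <= s -> vnorm (vsub y x) < del -> Rabs (s - t) < del ->
      Rabs (u y s - u x t) < eps.

(* The supremum over theta is encoded exactly:  sup_th f th <= 0  iff every
   f th <= 0 ;  sup_th f th >= 0  iff for all eps>0 some f th >= -eps. *)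
Definition visc_sol_E N (Theta : Type) (sigma : Theta -> pt N -> mat N)
  (H : Theta -> pt N -> pt N -> R) (u0 : pt N -> R) (u : pt N -> R -> R) : Prop :=
  cont_on_closed_half u /\
  (forall t, 0 <= t -> periodic (fun x => u x t)) /\
  (forall x, u x 0 = u0 x) /\
  (forall x t a p X, 0 < t -> psuperjet u x t a p X ->
     forall th, a + Lop sigma H th x p X <= 0) /\
  (forall x t a p X, 0 < t -> psubjet u x t a p X ->
     forall eps, 0 < eps -> exists th, a + Lop sigma H th x p X >= - eps).

(* v is a viscosity solution of  lam v + sup_th {-tr(A_th D^2 v) + H_th(x,Dv)} = c0
   on T^N ((E_lam) is lam > 0, c0 = 0;  (S) is lam = 0, c0 = c). *)
Definition visc_sol_stat N (Theta : Type) (sigma : Theta -> pt N -> mat N)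
  (H : Theta -> pt N -> pt N -> R) (lam c0 : R) (v : pt N -> R) : Prop :=
  periodic v /\
  (forall x eps, 0 < eps -> exists del, 0 < del /\
     forall y, vnorm (vsub y x) < del -> Rabs (v y - v x) < eps) /\
  (forall x p X, superjet v x p X ->
     forall th, lam * v x + Lop sigma H th x p X <= c0) /\
  (forall x p X, subjet v x p X ->
     forall eps, 0 < eps -> exists th, lam * v x + Lop sigma H th x p X >= c0 - eps).

Definition lipschitz N (C : R) (v : pt N -> R) : Prop :=
  forall x y, Rabs (v x - v y) <= C * vnorm (vsub x y).

Definition degenerate_set N (Theta : Type) (sigma : Theta -> pt N -> mat N) (x : pt N) : Prop :=
  forall th, diffmat (sigma th x) = @mzero N.

Definition assumption_H N (Theta : Type) (sigma : Theta -> pt N -> mat N)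
  (H : Theta -> pt N -> pt N -> R) (c : R) (K : pt N -> Prop) : Prop :=
  exists mu0, 1 < mu0 /\
  (forall th x p mu, 1 < mu < mu0 ->
     H th x (vscal mu p) - mu * H th x p >= (1 - mu) * c) /\
  torus_compact K /\
  (forall x, K x -> degenerate_set sigma x) /\
  (forall th x p, K x -> H th x p >= c) /\
  (forall x p mu, degenerate_set sigma x -> ~ K x -> p <> @vzero N -> 1 < mu <= mu0 ->
     (* inf_th {H(x,mu p) - mu H(x,p)} > (1-mu) c *)
     exists eta, 0 < eta /\ forall th,
       H th x (vscal mu p) - mu * H th x p >= (1 - mu) * c + eta).

(* Let w(s) = u(x0,s) + c s with x0 in K, and suppose w(t1) < w(t2) for some
   t1 < t2.  By a penalization argument, maximize
       u(y,s) - (lam - c) s - kap (s - t2)_+^2 - |y - x0|^2 / eps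
   over a compact box around (x0,[t1,t2+1]), with lam proportional to the gap
   w(t2) - w(t1), kap large and eps small.  Since u is C-Lipschitz in space, the
   maximum point (ys,ss) satisfies |ys - x0| <= C eps, and the gap forces ss to be
   interior in time, so the test function provides a parabolic superjet of u at
   (ys,ss).  The subsolution inequality then reads
       lam + 2 kap (ss - t2)_+ - tr(A(ys) 2I/eps) + H(ys, p) - c <= 0,
   while on K we have A = 0 (so tr(A(ys)) = O(eps^2)) and H >= c (so
   H(ys,p) >= c - O(eps)): this contradicts lam > 0 for eps small. *)

From Pilot Require Import Defs.
From Stdlib Require Import Reals Lra ZArith.
From mathcomp Require Import all_boot all_order all_algebra.
From mathcomp Require Import all_classical all_reals all_analysis.
From mathcomp Require Import Rstruct Rstruct_topology.
Import Order.TTheory GRing.Theory Num.Theory.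
(* Re-import the problem's definitions so that they take precedence over
   homonymous library notions (periodic, lipschitz, mzero). *)
Import Defs.
Set Implicit Arguments.
Unset Strict Implicit.
Local Open Scope ring_scope.
Local Open Scope R_scope.

Lemma Rabs_bounds a b : Rabs a <= b -> - b <= a <= b.
Proof. by rewrite /Rabs; case: Rcase_abs; lra. Qed.

Section FiniteSums.
Variable n : nat.
Implicit Types F G : 'I_n -> R.

Lemma sumR_ext F G : (forall i, F i = G i) ->
  \big[Rplus/0]_(i < n) F i = \big[Rplus/0]_(i < n) G i.
Proof. by move=> hFG; apply: eq_bigr. Qed.

Lemma sumR_add F G :
  \big[Rplus/0]_(i < n) (F i + G i) = \big[Rplus/0]_(i < n) F i + \big[Rplus/0]_(i < n) G i.
Proof. exact: big_split. Qed.

Lemma sumR_scal k F :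
  \big[Rplus/0]_(i < n) (k * F i) = k * \big[Rplus/0]_(i < n) F i.
Proof. by rewrite -(big_distrr (R:=R)). Qed.

Lemma sumR_zero F : (forall i, F i = 0) -> \big[Rplus/0]_(i < n) F i = 0.
Proof. by move=> hF; apply: big1 => i _; apply: hF. Qed.

Lemma sumR_pick F j : \big[Rplus/0]_(i < n) (if i == j then F i else 0) = F j.
Proof. by rewrite -big_mkcond /= big_pred1_eq. Qed.

Lemma sumR_ge0 F : (forall i, 0 <= F i) -> 0 <= \big[Rplus/0]_(i < n) F i.
Proof. by move=> hF; apply/RleP; apply: sumr_ge0 => i _; apply/RleP. Qed.

Lemma sumR_term_le F j : (forall i, 0 <= F i) -> F j <= \big[Rplus/0]_(i < n) F i.
Proof.
move=> hF; apply/RleP; rewrite (bigD1 j) //= lerDl.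
by apply: sumr_ge0 => i _; apply/RleP.
Qed.

Lemma sumR_abs_le F d : (forall i, Rabs (F i) <= d) ->
  Rabs (\big[Rplus/0]_(i < n) F i) <= INR n * d.
Proof.
move=> hF; rewrite RabsE INRE RmultE; apply/RleP.
apply: le_trans (ler_norm_sum _ _ _) _.
have -> : (n%:R * d = \sum_(i < n) d)%R by rewrite sumr_const card_ord mulr_natl.
by apply: ler_sum => i _; apply/RleP; rewrite -RabsE.
Qed.

End FiniteSums.

Section Euclidean.
Variable N : nat.
Implicit Types x y z h : pt N.

Lemma dot_ge0 h : 0 <= dot h h.
Proof. by apply: sumR_ge0 => i; apply: Rle_0_sqr. Qed.

Lemma vnorm_ge0 h : 0 <= vnorm h.
Proof. exact: sqrt_pos. Qed.

Lemma vnorm_sq h : vnorm h ^ 2 = dot h h.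
Proof. by rewrite /vnorm /= Rmult_1_r sqrt_sqrt //; apply: dot_ge0. Qed.

Lemma vnorm_sub_diag x : vnorm (vsub x x) = 0.
Proof. by rewrite /vnorm /dot sumR_zero ?sqrt_0 // => i; rewrite /vsub; ring. Qed.

Lemma dot_scal_l k x y : dot (vscal k x) y = k * dot x y.
Proof. by rewrite /dot -sumR_scal; apply: sumR_ext => i; rewrite /vscal; ring. Qed.

Lemma vnorm_scal k x : vnorm (vscal k x) = Rabs k * vnorm x.
Proof.
rewrite /vnorm dot_scal_l.
have -> : dot x (vscal k x) = k * dot x x.
  by rewrite /dot -sumR_scal; apply: sumR_ext => i; rewrite /vscal; ring.
rewrite -Rmult_assoc sqrt_mult_alt; last exact: Rle_0_sqr.
by rewrite -/(Rsqr k) sqrt_Rsqr_abs.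
Qed.

Lemma coord_le_vnorm h i : Rabs (h i) <= vnorm h.
Proof.
have hi : h i * h i <= dot h h.
  by apply: (sumR_term_le (F := fun j => h j * h j)) => j; apply: Rle_0_sqr.
have hn : vnorm h * vnorm h = dot h h by rewrite -vnorm_sq /=; ring.
rewrite -(Rabs_pos_eq _ (vnorm_ge0 h)); apply: Rsqr_le_abs_0; rewrite /Rsqr; lra.
Qed.

Lemma vnorm_lt_coord h d : 0 < d -> (forall i, Rabs (h i) < d) ->
  vnorm h < (INR N + 1) * d.
Proof.
move=> d0 hd.
have hdot : Rabs (dot h h) <= INR N * (d * d).
  apply: sumR_abs_le => i; rewrite Rabs_mult.
  by have := hd i; have := Rabs_pos (h i); nra.
have hN := pos_INR N.
have hn : vnorm h * vnorm h = dot h h by rewrite -vnorm_sq /=; ring.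
rewrite Rabs_pos_eq in hdot; last exact: dot_ge0.
have hv := vnorm_ge0 h.
apply: Rsqr_incrst_0; rewrite /Rsqr; nra.
Qed.

Lemma coord_dist_le x y z i : Rabs (x i - z i) <= vnorm (vsub x y) + vnorm (vsub y z).
Proof.
have hxy := coord_le_vnorm (vsub x y) i; have hyz := coord_le_vnorm (vsub y z) i.
have := Rabs_triang (x i - y i) (y i - z i); rewrite /vsub in hxy hyz *.
have -> : x i - y i + (y i - z i) = x i - z i by ring.
lra.
Qed.

Lemma sqdist_expand x0 y z :
  dot (vsub y x0) (vsub y x0) =
  dot (vsub z x0) (vsub z x0) + 2 * dot (vsub z x0) (vsub y z) + dot (vsub y z) (vsub y z).
Proof.
rewrite /dot -sumR_scal -!sumR_add; apply: sumR_ext => i; rewrite /vsub; ring.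
Qed.

End Euclidean.

Section Matrices.
Variable N : nat.

Definition scalmx (k : R) : mat N := fun i j => if i == j then k else 0.

Lemma scalmx_sym k : msym (scalmx k).
Proof. by move=> i j; rewrite /scalmx eq_sym. Qed.

Lemma quad_scalmx k (h : pt N) : quad (scalmx k) h = k * dot h h.
Proof.
rewrite /quad /dot -sumR_scal; apply: sumR_ext => i.
rewrite (sumR_ext (G := fun j => if j == i then k * h i * h j else 0)).
  by rewrite sumR_pick; ring.
by move=> j; rewrite /scalmx eq_sym; case: (j == i); ring.
Qed.

Lemma trace_mul_scalmx (A : mat N) k : trace (mmul A (scalmx k)) = k * trace A.
Proof.
rewrite /trace -sumR_scal; apply: sumR_ext => i.
rewrite /mmul (sumR_ext (G := fun j => if j == i then A i j * k else 0)).
  by rewrite sumR_pick; ring.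
by move=> j; rewrite /scalmx; case: (j == i); ring.
Qed.

Lemma trace_diffmat (s : mat N) : trace (diffmat s) = mnorm s ^ 2.
Proof.
rewrite /mnorm /= Rmult_1_r sqrt_sqrt //.
by apply: sumR_ge0 => i; apply: sumR_ge0 => j; apply: Rle_0_sqr.
Qed.

Lemma diffmat_eq0 (s : mat N) : diffmat s = @mzero N -> forall i j, s i j = 0.
Proof.
move=> hs i j.
pose row2 i' := \big[Rplus/0]_(m < N) (s i' m * s i' m).
have row2_ge0 i' : 0 <= row2 i' by apply: sumR_ge0 => m; apply: Rle_0_sqr.
have tot0 : \big[Rplus/0]_(i' < N) row2 i' = 0.
  by change (trace (diffmat s) = 0); rewrite hs /trace sumR_zero.
have rowi0 : row2 i = 0.
  by have := sumR_term_le i row2_ge0; have := row2_ge0 i; lra.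
have : s i j * s i j <= row2 i.
  by apply: (sumR_term_le j (F := fun m => s i m * s i m)) => m; apply: Rle_0_sqr.
by have := Rle_0_sqr (s i j); rewrite /Rsqr; nra.
Qed.

End Matrices.

Section Compactness.
Variable N : nat.

Definition jcont (f : pt N -> R -> R) : Prop :=
  forall y s eps, 0 < eps -> exists del, 0 < del /\
    forall y' s', (forall i, Rabs (y' i - y i) < del) -> Rabs (s' - s) < del ->
      Rabs (f y' s' - f y s) < eps.

Lemma entry_le_mx_norm n (v : 'rV[R]_n) i : (`|v ord0 i| <= `|v|)%O.
Proof.
have /mapP[j Hj ->] : `|v ord0 i| \in [seq `|v x.1 x.2| | x : 'I_1 * 'I_n].
  by apply/mapP; exists (ord0, i) => //=; rewrite mem_enum.
by rewrite [leRHS]/Num.norm /= mx_normrE; apply/bigmax_geP; right => /=; exists j.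
Qed.

(* The factors of the box prod_j [x0_j - r, x0_j + r] x [a, b], indexed by 'I_N.+1
   with the time coordinate last. *)
Definition box_factor (x0 : pt N) (r a b : R) (i : 'I_N.+1) : set R :=
  if unlift ord_max i is Some j then `[(x0 j - r), (x0 j + r)]%classic
  else `[a, b]%classic.

(* Extreme value theorem on a compact box of R^N x R, obtained by identifying
   R^N x R with row vectors of size N+1. *)
Lemma box_EVT (f : pt N -> R -> R) (x0 : pt N) (r a b : R) :
  0 <= r -> a <= b -> jcont f ->
  exists ym sm, (forall i, Rabs (ym i - x0 i) <= r) /\ a <= sm <= b /\
    forall y s, (forall i, Rabs (y i - x0 i) <= r) -> a <= s <= b -> f y s <= f ym sm.
Proof.
move=> r0 ab fc.
pose Y (v : 'rV[R]_N.+1) : pt N := fun j => v ord0 (lift ord_max j).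
pose S (v : 'rV[R]_N.+1) : R := v ord0 ord_max.
pose mk (y : pt N) (s : R) : 'rV[R]_N.+1 :=
  \row_i (if unlift ord_max i is Some j then y j else s).
pose A := [set v : 'rV[R]_N.+1 | forall i, box_factor x0 r a b i (v ord0 i)]%classic.
have A_compact : compact A.
  by apply: rV_compact => i; rewrite /box_factor; case: (unlift _ _) => *;
    exact: segment_compact.
have YmkE y s : Y (mk y s) = y by apply: funext => j; rewrite /Y /mk mxE liftK.
have SmkE y s : S (mk y s) = s by rewrite /S /mk mxE unlift_none.
have mk_in_A y s : (forall i, Rabs (y i - x0 i) <= r) -> a <= s <= b -> A (mk y s).
  move=> hy [hs1 hs2] i; rewrite /box_factor mxE.
  case: (unlift _ _) => [j|]; rewrite /= in_itv /=; apply/andP; split; apply/RleP;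
    try lra; by move: (hy j) => /Rabs_bounds; lra.
have A0 : (A !=set0)%classic.
  by exists (mk x0 a); apply: mk_in_A => [i|]; [rewrite Rminus_diag Rabs_R0 | lra].
have fYS_cont : continuous (fun v => f (Y v) (S v)).
  move=> v; apply/(@cvgrPdist_lt R R^o _ _ (nbhs_filter v)) => e /RltP e0.
  have [d [/RltP d0 hd]] := fc (Y v) (S v) e e0.
  apply/(@nbhs_normP R ('rV[R]_N.+1)); exists d => //= w; rewrite /ball_ /= => hw.
  have entry_close i : Rabs (w ord0 i - v ord0 i) < d.
    rewrite RabsE; apply/RltP; apply: le_lt_trans hw; rewrite (distrC (w _ _)).
    by have := entry_le_mx_norm (v - w)%R i; rewrite !mxE.
  by apply/RltP; rewrite -RabsE Rabs_minus_sym; apply: hd => [i|]; apply: entry_close.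
have [m mA mmax] := EVT_max_rV A0 A_compact (continuous_subspaceT fYS_cont).
rewrite inE in mA.
exists (Y m), (S m); split; [|split].
- move=> i; have := mA (lift ord_max i); rewrite /box_factor liftK /= in_itv /=.
  by move=> /andP[/RleP h1 /RleP h2]; apply: Rabs_le; rewrite /Y; lra.
- have := mA ord_max; rewrite /box_factor unlift_none /= in_itv /=.
  by move=> /andP[/RleP h1 /RleP h2]; rewrite /S; lra.
- move=> y s hy hs; have := mmax (mk y s).
  by rewrite YmkE SmkE => h; apply/RleP; apply: h; rewrite inE; exact: mk_in_A.
Qed.

Lemma jcont_add (f g : pt N -> R -> R) :
  jcont f -> jcont g -> jcont (fun y s => f y s + g y s).
Proof.
move=> hf hg y s eps e0.
have [d1 [d10 h1]] := hf y s (eps / 2) ltac:(lra).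
have [d2 [d20 h2]] := hg y s (eps / 2) ltac:(lra).
exists (Rmin d1 d2); split; first exact: Rmin_pos.
move=> y' s' hy hs.
have := h1 y' s' (fun i => Rlt_le_trans _ _ _ (hy i) (Rmin_l _ _)) (Rlt_le_trans _ _ _ hs (Rmin_l _ _)).
have := h2 y' s' (fun i => Rlt_le_trans _ _ _ (hy i) (Rmin_r _ _)) (Rlt_le_trans _ _ _ hs (Rmin_r _ _)).
have := Rabs_triang (f y' s' - f y s) (g y' s' - g y s).
have -> : f y' s' - f y s + (g y' s' - g y s) = f y' s' + g y' s' - (f y s + g y s) by ring.
lra.
Qed.

Lemma jcont_opp (f : pt N -> R -> R) : jcont f -> jcont (fun y s => - f y s).
Proof.
move=> hf y s eps e0; have [d [d0 hd]] := hf y s eps e0.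
exists d; split => // y' s' hy hs.
by rewrite -Rabs_Ropp (_ : - (- f y' s' - - f y s) = f y' s' - f y s); [apply: hd|ring].
Qed.

Lemma jcont_time (h : R -> R) : Ranalysis1.continuity h -> jcont (fun _ s => h s).
Proof.
move=> hc y s eps e0.
have [alp [alp0 ha]] := hc s eps e0.
exists alp; split => // y' s' _ hs.
case: (Req_dec s' s) => [->|ne]; first by rewrite Rminus_diag Rabs_R0.
exact: (ha s' (conj (conj I (not_eq_sym ne)) hs)).
Qed.

Lemma jcont_sqdist (x0 : pt N) k : jcont (fun y _ => k * dot (vsub y x0) (vsub y x0)).
Proof.
move=> y s eps e0.
set M := vnorm (vsub y x0).
have M0 : 0 <= M := vnorm_ge0 _.
have hN := pos_INR N.
have hk := Rabs_pos k.
set Q := (Rabs k + 1) * (INR N + 1) * (2 * M + 1).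
have Q0 : 0 < Q by rewrite /Q; apply: Rmult_lt_0_compat; [apply: Rmult_lt_0_compat|]; lra.
set d := Rmin 1 (eps / Q).
have d0 : 0 < d by apply: Rmin_pos; [lra|apply: Rdiv_lt_0_compat].
have d1 : d <= 1 by apply: Rmin_l.
have dQ : d * Q <= eps.
  have : d <= eps / Q by apply: Rmin_r.
  move=> h; have := Rmult_le_compat_r Q _ _ (Rlt_le _ _ Q0) h.
  by rewrite /Rdiv Rmult_assoc Rinv_l ?Rmult_1_r; lra.
exists d; split => // y' s' hy _.
set a := vsub y x0; set h := vsub y' y.
have ha : Rabs (dot a h) <= INR N * (M * d).
  apply: sumR_abs_le => i; rewrite Rabs_mult.
  have c1 : Rabs (a i) <= M := coord_le_vnorm a i.
  have c2 : Rabs (h i) < d := hy i.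
  by have := Rabs_pos (a i); have := Rabs_pos (h i); nra.
have hh : Rabs (dot h h) <= INR N * (d * d).
  apply: sumR_abs_le => i; rewrite Rabs_mult.
  have c2 : Rabs (h i) < d := hy i.
  by have := Rabs_pos (h i); nra.
rewrite (sqdist_expand x0 y' y) -/a -/h.
have -> : k * (dot a a + 2 * dot a h + dot h h) - k * dot a a = k * (2 * dot a h + dot h h)
  by ring.
have hsum : Rabs (2 * dot a h + dot h h) <= INR N * d * (2 * M + 1).
  have := Rabs_triang (2 * dot a h) (dot h h); rewrite Rabs_mult (Rabs_pos_eq 2); last lra.
  have : INR N * (d * d) <= INR N * d by apply: Rmult_le_compat_l => //; nra.
  nra.
rewrite Rabs_mult.
have : Rabs k * Rabs (2 * dot a h + dot h h) <= Rabs k * (INR N * d * (2 * M + 1))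
  by apply: Rmult_le_compat_l.
have : Rabs k * (INR N * d * (2 * M + 1)) < d * Q.
  rewrite /Q; have : 0 < d * (2 * M + 1) by nra.
  move=> p; have : INR N * d * (2 * M + 1) < (INR N + 1) * (d * (2 * M + 1)) by nra.
  nra.
lra.
Qed.

Lemma Rmax_left_lipschitz a b m : Rabs (Rmax a m - Rmax b m) <= Rabs (a - b).
Proof.
rewrite /Rmax; case: Rle_dec; case: Rle_dec; rewrite /Rabs;
  repeat case: Rcase_abs; lra.
Qed.

Lemma jcont_clamped (u : pt N -> R -> R) t1 : cont_on_closed_half u -> 0 <= t1 ->
  jcont (fun y s => u y (Rmax s t1)).
Proof.
move=> hu t10 y s eps e0.
have hm : 0 <= Rmax s t1 by have := Rmax_r s t1; lra.
have [dl [dl0 hd]] := hu y (Rmax s t1) hm eps e0.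
have hN := pos_INR N.
have q0 : 0 < dl / (INR N + 1) by apply: Rdiv_lt_0_compat; lra.
have e1 : (INR N + 1) * (dl / (INR N + 1)) = dl by field; lra.
exists (dl / (INR N + 1)); split => // y' s' hy hs.
apply: hd.
- by have := Rmax_r s' t1; lra.
- by rewrite -e1; apply: vnorm_lt_coord.
- have := Rmax_left_lipschitz s' s t1.
  have : dl / (INR N + 1) <= dl by rewrite -{2}e1; nra.
  lra.
Qed.

End Compactness.

(* A continuous Z^N-periodic function attains its minimum: by periodicity it suffices
   to minimize over the unit cube, which is compact. *)
Lemma periodic_min N (v : pt N -> R) : periodic v ->
  (forall x eps, 0 < eps -> exists del, 0 < del /\
     forall y, vnorm (vsub y x) < del -> Rabs (v y - v x) < eps) ->
  exists xm, forall y, v xm <= v y.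
Proof.
move=> hp hc.
have hN := pos_INR N.
have neg_v_cont : jcont (fun y (_ : R) => - v y).
  move=> y s eps e0; have [dl [dl0 hd]] := hc y eps e0.
  have q0 : 0 < dl / (INR N + 1) by apply: Rdiv_lt_0_compat; lra.
  exists (dl / (INR N + 1)); split => // y' s' hy _.
  have e1 : (INR N + 1) * (dl / (INR N + 1)) = dl by field; lra.
  have := vnorm_lt_coord q0 hy; rewrite e1 => /hd.
  by rewrite -Rabs_Ropp; congr (Rabs _ < _); ring.
have [xm [sm [_ [_ hmax]]]] := box_EVT (fun _ => / 2) (Rlt_le _ _ (pos_half_prf)) (Rle_refl 0) neg_v_cont.
exists xm => y.
pose k i := Z.sub (up (y i)) 1.
pose z i := y i - IZR (k i).
have z_shift : zshift z k = y by apply: funext => i; rewrite /zshift /z; ring.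
rewrite -z_shift hp.
have z_in_cube i : Rabs (z i - / 2) <= / 2.
  have [h1 h2] := archimed (y i).
  by rewrite /z /k minus_IZR; apply: Rabs_le; lra.
by have := hmax z 0 z_in_cube (conj (Rle_refl 0) (Rle_refl 0)); lra.
Qed.

(* A viscosity solution of a stationary equation on the torus forces the control set
   to be nonempty: at a minimum point, (0,0) is a subjet, and the supersolution
   inequality produces a control. *)
Lemma stat_sol_controls_inhabited N (Theta : Type) (sigma : Theta -> pt N -> mat N)
  (H : Theta -> pt N -> pt N -> R) lam c0 v :
  visc_sol_stat sigma H lam c0 v -> inhabited Theta.
Proof.
move=> [hp [hc [_ hsuper]]].
have [xm hm] := periodic_min hp hc.
have hsj : subjet v xm (@vzero N) (@mzero N).
  split=> // e e0; exists 1; split=> [|y _]; first lra.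
  have -> : dot (@vzero N) (vsub y xm) = 0 by apply: sumR_zero => i; rewrite /vzero; ring.
  have -> : quad (@mzero N) (vsub y xm) = 0.
    by apply: sumR_zero => i; apply: sumR_zero => j; rewrite /mzero; ring.
  have : 0 <= e * vnorm (vsub y xm) ^ 2 by apply: Rmult_le_pos; [lra|apply: pow_le; apply: vnorm_ge0].
  by have := hm y; lra.
by have [th _] := hsuper xm _ _ hsj 1 Rlt_0_1; constructor.
Qed.

(* Positive part r_+ = (r + |r|)/2.  Its square is C^1 with derivative 2 r_+, and
   pos_sq_tangent is the resulting second-order Taylor bound; this is what makes the
   time penalty kap (s - t2)_+^2 usable in a test function. *)
Definition pos (r : R) : R := (r + Rabs r) / 2.

Lemma pos_ge0 r : 0 <= pos r.
Proof. by rewrite /pos /Rabs; case: Rcase_abs; lra. Qed.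

Lemma pos_nonpos r : r <= 0 -> pos r = 0.
Proof. by rewrite /pos /Rabs; case: Rcase_abs; lra. Qed.

Lemma pos_nonneg r : 0 <= r -> pos r = r.
Proof. by rewrite /pos /Rabs; case: Rcase_abs; lra. Qed.

Lemma continuity_identity : Ranalysis1.continuity (fun r => r).
Proof. exact: Ranalysis1.derivable_continuous Ranalysis1.derivable_id. Qed.

Lemma pos_continuity : Ranalysis1.continuity pos.
Proof.
rewrite /pos /Rdiv; apply: continuity_mult; last exact: continuity_const.
by apply: continuity_plus; [exact: continuity_identity|exact: Rcontinuity_abs].
Qed.

Lemma pos_sq_tangent r r' : pos r ^ 2 - pos r' ^ 2 - 2 * pos r' * (r - r') <= (r - r') ^ 2.
Proof.
have hsq := pow2_ge_0 (r - r').
case: (Rle_or_lt r 0) => hr; case: (Rle_or_lt r' 0) => hr';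
  rewrite ?(pos_nonpos hr) ?(pos_nonpos hr') ?(pos_nonneg (Rlt_le _ _ hr))
    ?(pos_nonneg (Rlt_le _ _ hr')); nra.
Qed.

Section TestFunction.
Variable N : nat.

Definition test_fn (x0 : pt N) (beta kap gam t2 : R) (y : pt N) (s : R) : R :=
  beta * s + kap * pos (s - t2) ^ 2 + gam * dot (vsub y x0) (vsub y x0).

Lemma test_fn_time_continuity beta kap t2 :
  Ranalysis1.continuity (fun s => beta * s + kap * pos (s - t2) ^ 2).
Proof.
have shifted : Ranalysis1.continuity (fun s => pos (s - t2)).
  apply: (continuity_comp (fun s => s - t2) pos); last exact: pos_continuity.
  by apply: continuity_minus; [exact: continuity_identity|exact: continuity_const].
have -> : (fun s => beta * s + kap * pos (s - t2) ^ 2) =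
          (fun s => beta * s + kap * (pos (s - t2) * pos (s - t2))).
  by apply: funext => s; ring.
apply: continuity_plus; apply: continuity_mult; try exact: continuity_const.
- exact: continuity_identity.
- exact: continuity_mult.
Qed.

Lemma jcont_test_fn (x0 : pt N) beta kap gam t2 : jcont (test_fn x0 beta kap gam t2).
Proof. exact: jcont_add (jcont_time (test_fn_time_continuity beta kap t2)) (jcont_sqdist x0 gam). Qed.

Lemma superjet_of_test_max (u : pt N -> R -> R) x0 beta kap gam t2 ys ss del0 :
  0 <= kap -> 0 < del0 ->
  (forall y s, 0 < s -> vnorm (vsub y ys) < del0 -> Rabs (s - ss) < del0 ->
     u y s - test_fn x0 beta kap gam t2 y s <= u ys ss - test_fn x0 beta kap gam t2 ys ss) ->
  psuperjet u ys ss (beta + 2 * kap * pos (ss - t2))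
    (vscal (2 * gam) (vsub ys x0)) (scalmx (2 * gam)).
Proof.
move=> kap0 del00 hmax; split; first exact: scalmx_sym.
move=> e e0.
have ek0 : 0 < e / (kap + 1) by apply: Rdiv_lt_0_compat; lra.
exists (Rmin del0 (e / (kap + 1))); split; first exact: Rmin_pos.
move=> y s s0 hy hs.
have hm := hmax y s s0 (Rlt_le_trans _ _ _ hy (Rmin_l _ _)) (Rlt_le_trans _ _ _ hs (Rmin_l _ _)).
rewrite /test_fn (sqdist_expand x0 y ys) in hm.
rewrite dot_scal_l quad_scalmx.
have hpos := pos_sq_tangent (s - t2) (ss - t2).
rewrite (_ : s - t2 - (ss - t2) = s - ss) in hpos; last by ring.
have hpos' := Rmult_le_compat_l kap _ _ kap0 hpos.
have hrem : kap * (s - ss) ^ 2 <= e * Rabs (s - ss).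
  have hsmall : Rabs (s - ss) * (kap + 1) <= e.
    have h := Rlt_le _ _ (Rlt_le_trans _ _ _ hs (Rmin_r _ _)).
    have h' := Rmult_le_compat_r (kap + 1) _ _ ltac:(lra) h.
    by rewrite /Rdiv Rmult_assoc Rinv_l ?Rmult_1_r in h'; lra.
  rewrite -(pow2_abs (s - ss)); have := Rabs_pos (s - ss); nra.
have : 0 <= e * vnorm (vsub y ys) ^ 2 by apply: Rmult_le_pos; [lra|apply: pow_le; apply: vnorm_ge0].
rewrite vnorm_sq; lra.
Qed.

End TestFunction.

(* At a point of the degenerate set where H >= c, the operator with a scalar Hessian
   k I is almost >= c nearby: the diffusion term is quadratically small since sigma
   vanishes at x0, and H varies in a Lipschitz way. *)
Lemma Lop_lower_degenerate N (Theta : Type) (sigma : Theta -> pt N -> mat N)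
  (H : Theta -> pt N -> pt N -> R) th x0 y p C CR k rho c :
  0 <= C -> 0 <= CR -> 0 <= k -> vnorm (vsub y x0) <= rho ->
  diffmat (sigma th x0) = @mzero N ->
  mnorm (msub (sigma th y) (sigma th x0)) <= C * vnorm (vsub y x0) ->
  Rabs (H th y p - H th x0 p) <= CR * vnorm (vsub y x0) ->
  c <= H th x0 p ->
  c - k * (C * rho) ^ 2 - CR * rho <= Lop sigma H th y p (scalmx k).
Proof.
move=> C0 CR0 k0 hr hdeg hsig hH hc.
have sig_eq : msub (sigma th y) (sigma th x0) = sigma th y.
  apply: funext => i; apply: funext => j.
  by rewrite /msub (diffmat_eq0 hdeg i j); ring.
rewrite sig_eq in hsig.
rewrite /Lop trace_mul_scalmx trace_diffmat.
have r0 := vnorm_ge0 (vsub y x0).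
have hsq : mnorm (sigma th y) ^ 2 <= (C * rho) ^ 2.
  apply: pow_incr; split; first exact: sqrt_pos.
  by apply: Rle_trans hsig _; apply: Rmult_le_compat_l.
have := Rmult_le_compat_l k _ _ k0 hsq.
have := Rmult_le_compat_l CR _ _ CR0 hr.
by move/Rabs_bounds: hH; lra.
Qed.

(* Completing the square:  C r - r^2 / eps <= C^2 eps / 4. *)
Lemma linear_minus_quadratic_le C r eps : 0 < eps -> C * r - / eps * r ^ 2 <= C * C * eps / 4.
Proof.
move=> eps0.
have e : C * C * eps / 4 - (C * r - / eps * r ^ 2) = / eps * (r - C * eps / 2) ^ 2
  by field; lra.
have : 0 <= / eps * (r - C * eps / 2) ^ 2.
  by apply: Rmult_le_pos; [apply: Rlt_le; apply: Rinv_0_lt_compat|apply: pow2_ge_0].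
lra.
Qed.

Lemma small_parameter a1 a2 b1 b2 : 0 <= a1 -> 0 <= a2 -> 0 < b1 -> 0 < b2 ->
  exists e, 0 < e /\ a1 * e < b1 /\ a2 * e < b2.
Proof.
move=> a10 a20 b10 b20.
have q1 : 0 < b1 / (a1 + 1) by apply: Rdiv_lt_0_compat; lra.
have q2 : 0 < b2 / (a2 + 1) by apply: Rdiv_lt_0_compat; lra.
pose e := Rmin (b1 / (a1 + 1)) (b2 / (a2 + 1)).
have e0 : 0 < e by apply: Rmin_pos.
have scaled a b : 0 <= a -> e <= b / (a + 1) -> e * (a + 1) <= b.
  move=> a0 h; have := Rmult_le_compat_r (a + 1) _ _ ltac:(lra) h.
  by rewrite /Rdiv Rmult_assoc Rinv_l ?Rmult_1_r; lra.
have := scaled a1 b1 a10 (Rmin_l _ _); have := scaled a2 b2 a20 (Rmin_r _ _).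
by exists e; split; [|split]; nra.
Qed.

(* Maximizing u(y,s) minus the test function
       (lam - c) s + kap (s - t2)_+^2 + |y - x0|^2 / eps
   over a compact box, the maximum point (ys,ss) stays eps-close to x0 (u is Lipschitz),
   and ss is interior in time: the gap between t1 and t2 excludes ss = t1 and the
   penalty kap excludes ss = t2 + 1.  Hence the test function yields a superjet. *)
Section Penalization.
Variables (N : nat) (u : pt N -> R -> R) (x0 : pt N) (C c t1 t2 lam kap eps : R).
Hypotheses (C_pos : 0 < C) (eps_pos : 0 < eps) (kap_ge0 : 0 <= kap) (lam_ge0 : 0 <= lam).
Hypotheses (t1_ge0 : 0 <= t1) (t1_lt_t2 : t1 < t2).
Hypothesis u_cont : cont_on_closed_half u.
Hypothesis u_lip : forall s, 0 <= s -> lipschitz C (fun x => u x s).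

Let w s := u x0 s + c * s.
Hypothesis gap_t1 : lam * (t2 - t1) + C * C * eps < w t2 - w t1.
Hypothesis gap_kap : w (t2 + 1) - w t2 + C * C * eps < kap.

(* The penalized functional; freezing time below t1 makes it continuous everywhere. *)
Definition pen (y : pt N) (s : R) : R :=
  u y (Rmax s t1) - test_fn x0 (lam - c) kap (/ eps) t2 y s.

Lemma pen_jcont : jcont pen.
Proof. exact: jcont_add (jcont_clamped u_cont t1_ge0) (jcont_opp (jcont_test_fn _ _ _ _ _)). Qed.

Lemma pen_on_slab y s : t1 <= s -> pen y s = u y s - test_fn x0 (lam - c) kap (/ eps) t2 y s.
Proof. by move=> hs; rewrite /pen Rmax_left. Qed.

Lemma pen_center s : t1 <= s -> pen x0 s = w s - lam * s - kap * pos (s - t2) ^ 2.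
Proof.
move=> hs; rewrite pen_on_slab // /test_fn /w.
rewrite (_ : dot (vsub x0 x0) (vsub x0 x0) = 0); first ring.
by rewrite -vnorm_sq vnorm_sub_diag; ring.
Qed.

Lemma pen_upper y s : t1 <= s ->
  pen y s <= w s - lam * s - kap * pos (s - t2) ^ 2 + C * C * eps / 4.
Proof.
move=> hs; rewrite pen_on_slab // /test_fn /w -vnorm_sq.
have := u_lip (ltac:(lra) : 0 <= s) y x0 => /= /Rabs_bounds.
have := linear_minus_quadratic_le C (vnorm (vsub y x0)) eps_pos.
lra.
Qed.

Lemma pen_max_near_center y s : t1 <= s -> pen x0 s <= pen y s -> vnorm (vsub y x0) <= C * eps.
Proof.
move=> hs hmax.
have := u_lip (ltac:(lra) : 0 <= s) y x0 => /= /Rabs_bounds hlip.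
rewrite !pen_on_slab // /test_fn -!vnorm_sq vnorm_sub_diag in hmax.
set r := vnorm (vsub y x0) in hlip hmax *.
have r0 : 0 <= r := vnorm_ge0 _.
have hr : / eps * r ^ 2 <= C * r by lra.
have : r * r <= C * eps * r.
  have := Rmult_le_compat_l eps _ _ (Rlt_le _ _ eps_pos) hr.
  by rewrite (_ : eps * (/ eps * r ^ 2) = r * r); [lra | field; lra].
have : 0 < C * eps by apply: Rmult_lt_0_compat.
nra.
Qed.

Lemma pen_max_interior y s : t1 <= s <= t2 + 1 -> pen x0 t2 <= pen y s -> t1 < s < t2 + 1.
Proof.
move=> [hs1 hs2] hmax.
rewrite pen_center ?Rminus_diag ?pos_nonpos in hmax; try lra.
have hup := pen_upper y hs1.
have CCe : 0 < C * C * eps by apply: Rmult_lt_0_compat; first nra.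
split.
- case: (Rle_lt_or_eq_dec _ _ hs1) => // e; subst s.
  by rewrite pos_nonpos in hup; lra.
- case: (Rle_lt_or_eq_dec _ _ hs2) => // e; subst s.
  by rewrite pos_nonneg in hup; lra.
Qed.

Lemma pen_superjet : exists ys ss, 0 < ss /\ vnorm (vsub ys x0) <= C * eps /\
  psuperjet u ys ss (lam - c + 2 * kap * pos (ss - t2))
    (vscal (2 * / eps) (vsub ys x0)) (scalmx (2 * / eps)).
Proof.
have box_r : 0 <= C * eps + 1 by nra.
have [ys [ss [_ [ss_range ys_max]]]] :=
  box_EVT x0 box_r (ltac:(lra) : t1 <= t2 + 1) pen_jcont.
have x0_box i : Rabs (x0 i - x0 i) <= C * eps + 1 by rewrite Rminus_diag Rabs_R0.
have ys_near := pen_max_near_center (proj1 ss_range) (ys_max x0 ss x0_box ss_range).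
have [ss_gt ss_lt] := pen_max_interior ss_range (ys_max x0 t2 x0_box ltac:(lra)).
exists ys, ss; split; first lra; split => //.
pose del0 := Rmin 1 (Rmin (ss - t1) (t2 + 1 - ss)).
have del0_pos : 0 < del0 by apply: Rmin_pos; [lra | apply: Rmin_pos; lra].
apply: (superjet_of_test_max (del0 := del0)) => // y s _ hy hs.
have := Rmin_l 1 (Rmin (ss - t1) (t2 + 1 - ss)).
have := Rmin_r 1 (Rmin (ss - t1) (t2 + 1 - ss)).
have := Rmin_l (ss - t1) (t2 + 1 - ss); have := Rmin_r (ss - t1) (t2 + 1 - ss).
rewrite -/del0 => d3 d2 d1 d0.
have s_range : t1 <= s <= t2 + 1 by move/Rlt_le/Rabs_bounds: hs; lra.
have y_box i : Rabs (y i - x0 i) <= C * eps + 1 by have := coord_dist_le y ys x0 i; lra.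
by rewrite -!pen_on_slab; [exact: ys_max | lra | lra].
Qed.

End Penalization.

Lemma strict_increase_superjet N (u : pt N -> R -> R) x0 C c B t1 t2 :
  0 < C -> 0 <= B -> 0 <= t1 -> t1 < t2 -> cont_on_closed_half u ->
  (forall s, 0 <= s -> lipschitz C (fun x => u x s)) ->
  u x0 t1 + c * t1 < u x0 t2 + c * t2 ->
  exists (eps lam kap : R) (ys : pt N) (ss : R),
    0 < eps /\ B * eps < lam /\ 0 <= kap /\ 0 < ss /\ vnorm (vsub ys x0) <= C * eps /\
    psuperjet u ys ss (lam - c + 2 * kap * pos (ss - t2))
      (vscal (2 * / eps) (vsub ys x0)) (scalmx (2 * / eps)).
Proof.
move=> C_pos B_ge0 t1_ge0 t1_lt_t2 u_cont u_lip hgap.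
pose w s := u x0 s + c * s.
pose lam := (w t2 - w t1) / (2 * (t2 - t1)).
have lam_pos : 0 < lam by apply: Rdiv_lt_0_compat; rewrite /w; lra.
have lam_gap : lam * (t2 - t1) = (w t2 - w t1) / 2 by rewrite /lam; field; lra.
have [eps [eps_pos [eps_gap eps_lam]]] :=
  @small_parameter (C * C) B ((w t2 - w t1) / 2) lam
    ltac:(nra) B_ge0 ltac:(rewrite /w; lra) lam_pos.
pose kap := Rabs (w (t2 + 1) - w t2) + C * C * eps + 1.
have kap_ge0 : 0 <= kap by rewrite /kap; have := Rabs_pos (w (t2 + 1) - w t2); nra.
have gap_kap : w (t2 + 1) - w t2 + C * C * eps < kap
  by have := Rle_abs (w (t2 + 1) - w t2); rewrite /kap; lra.
have gap_t1 : lam * (t2 - t1) + C * C * eps < w t2 - w t1 by lra.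
have [ys [ss [ss_pos [ys_near hsj]]]] :=
  pen_superjet C_pos eps_pos kap_ge0 (Rlt_le _ _ lam_pos) t1_ge0 t1_lt_t2 u_cont u_lip
    gap_t1 gap_kap.
by exists eps, lam, kap, ys, ss.
Qed.

Lemma Lop_lower_at_penalized_point N (Theta : Type) (sigma : Theta -> pt N -> mat N)
  (H : Theta -> pt N -> pt N -> R) th x0 ys C CR eps c :
  0 < C -> 0 <= CR -> 0 < eps -> vnorm (vsub ys x0) <= C * eps ->
  diffmat (sigma th x0) = @mzero N ->
  mnorm (msub (sigma th ys) (sigma th x0)) <= C * vnorm (vsub ys x0) ->
  (forall p q, vnorm p <= 2 * C -> vnorm q <= 2 * C ->
     Rabs (H th ys p - H th x0 q) <= CR * (vnorm (vsub ys x0) + vnorm (vsub p q))) ->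
  (forall p, c <= H th x0 p) ->
  c - (2 * (C * C * C * C) + CR * C) * eps <=
    Lop sigma H th ys (vscal (2 * / eps) (vsub ys x0)) (scalmx (2 * / eps)).
Proof.
move=> C_pos CR_ge0 eps_pos ys_near hdeg hsig hH hc.
set p := vscal (2 * / eps) (vsub ys x0).
have k_ge0 : 0 <= 2 * / eps by apply: Rlt_le; apply: Rdiv_lt_0_compat; lra.
have p_small : vnorm p <= 2 * C.
  rewrite /p vnorm_scal Rabs_pos_eq //.
  have := Rmult_le_compat_l _ _ _ k_ge0 ys_near.
  by rewrite (_ : 2 * / eps * (C * eps) = 2 * C) //; field; lra.
have H_near : Rabs (H th ys p - H th x0 p) <= CR * vnorm (vsub ys x0).
  by have := hH p p p_small p_small; rewrite vnorm_sub_diag Rplus_0_r.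
have := Lop_lower_degenerate (Rlt_le _ _ C_pos) CR_ge0 k_ge0 ys_near hdeg hsig H_near (hc p).
have -> : 2 * / eps * (C * (C * eps)) ^ 2 = 2 * (C * C * C * C) * eps by field; lra.
lra.
Qed.

Theorem lemma5p1 (N : nat) (Theta : Type) (d : Theta -> Theta -> R) (C : R)
  (sigma : Theta -> pt N -> mat N) (H : Theta -> pt N -> pt N -> R)
  (u0 : pt N -> R) (u : pt N -> R -> R) (c : R) (K : pt N -> Prop) :
  is_metric d ->
  standing_data C sigma H ->
  (* u solves (E), C-Lipschitz in x uniformly in t *)
  visc_sol_E sigma H u0 u ->
  (forall t, 0 <= t -> lipschitz C (fun x => u x t)) ->
  (* solutions v_lambda of (E_lambda), C-Lipschitz uniformly in lambda *)
  (forall lam, 0 < lam -> exists v, visc_sol_stat sigma H lam 0 v /\ lipschitz C v) ->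
  (* c is the ergodic constant: (S) has a Lipschitz solution *)
  (exists v L, visc_sol_stat sigma H 0 c v /\ lipschitz L v) ->
  assumption_H sigma H c K ->
  forall x0, K x0 ->
  forall s t, 0 <= s -> s <= t -> u x0 t + c * t <= u x0 s + c * s.
Proof.
move=> _ hstd hE u_lip _ [v [L [hS _]]] hA x0 Kx0 t1 t2 t1_ge0 t12.
apply: Rnot_lt_le => hgap.
have t1_lt_t2 : t1 < t2 by case: t12 => // e; subst t2; lra.
have [th0] := stat_sol_controls_inhabited hS.
case: hstd => C_pos [_ [_ [sig_lip [_ [_ H_lip]]]]].
case: hE => u_cont [_ [_ [u_sub _]]].
case: hA => _ [_ [_ [_ [K_deg [K_H _]]]]].
have [CR [CR_pos hCR]] := H_lip (2 * C) ltac:(lra).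
have [eps [lam [kap [ys [ss [eps_pos [eps_lam [kap_ge0 [ss_pos [ys_near hsj]]]]]]]]]] :=
  @strict_increase_superjet _ u x0 C c (2 * (C * C * C * C) + CR * C) t1 t2
    C_pos ltac:(nra) t1_ge0 t1_lt_t2 u_cont u_lip hgap.
have subsol := u_sub _ _ _ _ _ ss_pos hsj th0.
have op_low := Lop_lower_at_penalized_point C_pos (Rlt_le _ _ CR_pos) eps_pos ys_near
  (K_deg x0 Kx0 th0) (sig_lip th0 ys x0) (hCR th0 ys x0)
  (fun p => Rge_le _ _ (K_H th0 x0 p Kx0)).
have : 0 <= kap * pos (ss - t2) by apply: Rmult_le_pos => //; apply: pos_ge0.
lra.
Qed.
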